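(* There is an absolute constant $C>0$ such that the following holds. If $\zeta\le\min\{\frac12,\mathrm{ICR}\}$ and $(\gamma,\Delta)$ with $\gamma>0$, $\Delta\in[0,1)$ satisfy $\gamma<\frac{1+\Delta}{\zeta\sigma_{\max}^2}$ and $\frac{(1-\zeta)\gamma}{1-\Delta}\cdot\frac1n\operatorname{tr}(\boldsymbol A\boldsymbol A^T)<1$, then $\sqrt{\lambda_{2,\max}}\ge1-\frac{C\zeta}{\bar\kappa}$.
   Context: $\boldsymbol A\in\mathbb R^{n\times d}$; $\sigma_1^2\ge\dots\ge\sigma_n^2\ge0$ eigenvalues of $\boldsymbol A\boldsymbol A^T$, $\sigma_{\max}^2$ largest, $\sigma_{\min}^2$ smallest nonzero; $\bar\kappa=\frac{\frac1n\sum_j\sigma_j^2}{\sigma_{\min}^2}$, $\kappa=\sigma_{\max}^2/\sigma_{\min}^2$, $\mathrm{ICR}=\bar\kappa/\sqrt\kappa$. Batch fraction $\zeta\in(0,1]$. For $j\in[n]$: $\Omega_j=1-\gamma\zeta\sigma_j^2+\Delta$, $\lambda_{2,j}=\frac{-2\Delta+\Omega_j^2+\sqrt{\Omega_j^2(\Omega_j^2-4\Delta)}}{2}$ (complex root if the argument is negative); $\lambda_{2,\max}=\max\{|\lambda_{2,j}|:\sigma_j^2>0\}$. *)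

From HB Require Import structures.
From mathcomp Require Import all_boot all_order all_algebra.
From mathcomp Require Import reals.
From mathcomp Require Import complex.
Set Implicit Arguments. Unset Strict Implicit. Unset Printing Implicit Defensive.
Import Order.TTheory GRing.Theory Num.Theory.
Local Open Scope ring_scope.
Local Open Scope complex_scope.

(* The eigenvalues (with multiplicity) of the square matrix M : 'M_n are
   given by an n-tuple sig2 such that the characteristic polynomial of M
   splits as prod_j ('X - sig2_j). *)
Definition is_eigvals (R : rcfType) (n : nat) (M : 'M[R]_n) (sig2 : 'I_n -> R) :=
  char_poly M = \prod_(j < n) ('X - (sig2 j)%:P).

Section Quantities.
Variables (R : rcfType) (n : nat) (sig2 : 'I_n -> R).

Definition sig2_max : R := \big[Num.max/0]_(j < n) sig2 j.
Definition sig2_min : R := \big[Num.min/sig2_max]_(j < n | sig2 j != 0) sig2 j.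
Definition kappa_bar : R := ((n%:R)^-1 * \sum_(j < n) sig2 j) / sig2_min.
Definition kappa : R := sig2_max / sig2_min.
Definition ICR : R := kappa_bar / Num.sqrt kappa.

Variables (gamma zeta Delta : R).
Definition Omega (j : 'I_n) : R := 1 - gamma * zeta * sig2 j + Delta.
(* lambda_{2,j} = (-2 Delta + Omega_j^2 + sqrt(Omega_j^2 (Omega_j^2 - 4 Delta)))/2,
   with the principal complex square root (complex root if argument < 0). *)
Definition lambda2 (j : 'I_n) : R[i] :=
  ((- 2 * Delta + Omega j ^+ 2)%:C
   + sqrtC ((Omega j ^+ 2 * (Omega j ^+ 2 - 4 * Delta))%:C)) / 2.
Definition cmod (z : R[i]) : R := let: a +i* b := z in Num.sqrt (a ^+ 2 + b ^+ 2).
Definition lambda2_max : R := \big[Num.max/0]_(j < n | 0 < sig2 j) cmod (lambda2 j).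
End Quantities.

From HB Require Import structures.
From mathcomp Require Import all_boot all_order all_algebra.
From mathcomp Require Import reals.
From mathcomp Require Import complex.
From mathcomp Require Import ring lra.
Set Implicit Arguments. Unset Strict Implicit. Unset Printing Implicit Defensive.
Import Order.TTheory GRing.Theory Num.Theory.
Local Open Scope ring_scope.

(* Write W := Omega_j.  When W >= 0 and W^2 >= 4 Delta, lambda_{2,j} is the
   square of the larger root of x^2 - W x + Delta; otherwise it is a complex
   number of modulus Delta.  Take j with sigma_j^2 = sigma_min^2 and set
   e := zeta sigma_min^2 / mean(sigma^2) = zeta / kappa_bar.  Since zeta <= 1/2,
   the trace condition gives gamma mean(sigma^2) < 2 (1 - Delta), whence
   1 + Delta - W = gamma zeta sigma_min^2 < 2 e (1 - Delta).  If Delta >= 1 - 8e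
   then sqrt |lambda_{2,j}| >= sqrt Delta >= Delta.  Otherwise u := 1 - 4e has
   u^2 - W u + Delta < 0, so u is below the larger root and
   sqrt lambda_{2,j} > u.  This gives C = 8.  The hypothesis zeta <= ICR only
   serves to make sigma_min^2 and kappa_bar positive. *)

Lemma is_eigvals_trace (R : rcfType) (n : nat) (M : 'M[R]_n) (s : 'I_n -> R) :
  (0 < n)%N -> is_eigvals M s -> \tr M = \sum_(j < n) s j.
Proof.
move=> n_gt0 eigM; have := char_poly_trace M n_gt0; rewrite eigM.
have size_s : size (map s (index_enum 'I_n)) = n.
  by rewrite size_map [index_enum _]unlock -enumT size_enum_ord.
have := @coefPn_prod_XsubC _ (map s (index_enum 'I_n)).
by rewrite size_s -lt0n n_gt0 !big_map => /(_ isT) -> /oppr_inj.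
Qed.

Lemma big_selective (T : Type) (I : finType) (P : pred I) (F : I -> T)
    (op : T -> T -> T) (x : T) :
  (forall a b, op a b = a \/ op a b = b) ->
  \big[op/x]_(i | P i) F i = x \/ exists2 i, P i & \big[op/x]_(i | P i) F i = F i.
Proof.
move=> op_sel.
apply: (big_ind (fun y => y = x \/ exists2 i, P i & y = F i)) => [|y z y_x z_x|i Pi].
- by left.
- by case: (op_sel y z) => ->.
- by right; exists i.
Qed.

Lemma max_selective (R : realDomainType) (x y : R) :
  Num.max x y = x \/ Num.max x y = y.
Proof. by rewrite /Num.max; case: (x < y); [right | left]. Qed.

Lemma min_selective (R : realDomainType) (x y : R) :
  Num.min x y = x \/ Num.min x y = y.
Proof. by rewrite /Num.min; case: (x < y); [left | right]. Qed.

Section Spectrum.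
Variables (R : rcfType) (n : nat) (sig2 : 'I_n -> R).

Definition sig2_mean : R := n%:R^-1 * \sum_(j < n) sig2 j.

Lemma kappa_barE : kappa_bar sig2 = sig2_mean / sig2_min sig2.
Proof. by []. Qed.

Lemma sig2_min_mean_gt0 : 0 < ICR sig2 -> 0 < sig2_min sig2 /\ 0 < sig2_mean.
Proof.
move=> ICR_gt0.
have sqrt_kappa_gt0 : 0 < Num.sqrt (kappa sig2).
  rewrite lt_def sqrtr_ge0 andbT; apply: contraTneq ICR_gt0; rewrite /ICR => ->.
  by rewrite invr0 mulr0 ltxx.
have kappa_bar_gt0 : 0 < kappa_bar sig2.
  by move: ICR_gt0; rewrite /ICR pmulr_lgt0 ?invr_gt0.
have kappa_gt0 : 0 < kappa sig2 by rewrite -sqrtr_gt0.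
have max_gt0 : 0 < sig2_max sig2.
  rewrite lt_def bigmax_ge_id andbT; apply: contraTneq kappa_gt0; rewrite /kappa => ->.
  by rewrite mul0r ltxx.
have min_gt0 : 0 < sig2_min sig2.
  by move: kappa_gt0; rewrite /kappa pmulr_rgt0 // invr_gt0.
by split=> //; move: kappa_bar_gt0; rewrite kappa_barE pmulr_lgt0 ?invr_gt0.
Qed.

Lemma sig2_min_attained :
  0 < sig2_min sig2 -> exists2 j, 0 < sig2 j & sig2 j = sig2_min sig2.
Proof.
move=> min_gt0.
have [minE | [j _ minE]] : sig2_min sig2 = sig2_max sig2 \/
    exists2 j, sig2 j != 0 & sig2_min sig2 = sig2 j
  := big_selective _ _ _ (@min_selective R); last by exists j; rewrite -minE.
have [maxE | [j _ maxE]] : sig2_max sig2 = 0 \/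
    exists2 j, true & sig2_max sig2 = sig2 j
  := big_selective _ _ _ (@max_selective R).
  by move: min_gt0; rewrite minE maxE ltxx.
by exists j; rewrite -maxE -minE.
Qed.

End Spectrum.

Local Open Scope complex_scope.

Section HeavyBallRoot.
Variable R : rcfType.

Lemma half_complex (x y : R) : (x +i* y) / 2 = (x / 2) +i* (y / 2).
Proof.
have h2 : (2 : R[i]) != 0 by rewrite pnatr_eq0.
apply: (mulIf h2); rewrite mulfVK // -(rmorph_nat (real_complex R)).
by rewrite [RHS]/GRing.mul /=; congr (_ +i* _); field.
Qed.

Lemma cmod_real (x : R) : cmod x%:C = `|x|.
Proof. by rewrite /cmod /= expr0n addr0 sqrtr_sqr. Qed.

Lemma sqrtC_real_ge0 (b : R) : 0 <= b -> sqrtC b%:C = (Num.sqrt b)%:C.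
Proof.
move=> b0; rewrite -{1}(sqr_sqrtr b0) rmorphXn /=.
by rewrite sqrCK // ler0c sqrtr_ge0.
Qed.

Lemma sqrtC_real_le0 (b : R) :
  b <= 0 -> exists y, sqrtC b%:C = 0 +i* y /\ y ^+ 2 = - b.
Proof.
move=> b0; have := sqrtCK b%:C.
case: (sqrtC b%:C) => x y; rewrite expr2 => -[re_eq im_eq].
have x0 : x = 0.
  have /eqP : (x * y) *+ 2 = 0 by rewrite mulr2n {2}mulrC.
  rewrite mulrn_eq0 /= mulf_eq0 => /orP[/eqP // | /eqP y0].
  by move: re_eq; rewrite y0 mulr0 subr0 => xx_eq; nra.
exists y; split; first by rewrite x0.
by rewrite -re_eq x0 mul0r sub0r opprK expr2.
Qed.

Definition lambda2_of (D W : R) : R[i] :=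
  ((- 2 * D + W ^+ 2)%:C + sqrtC ((W ^+ 2 * (W ^+ 2 - 4 * D))%:C)) / 2.

Lemma lambda2E (n : nat) (sig2 : 'I_n -> R) gamma zeta Delta j :
  lambda2 sig2 gamma zeta Delta j = lambda2_of Delta (Omega sig2 gamma zeta Delta j).
Proof. by []. Qed.

Lemma lambda2_of_real (D W : R) : 0 <= W -> 4 * D <= W ^+ 2 ->
  lambda2_of D W = (((W + Num.sqrt (W ^+ 2 - 4 * D)) / 2) ^+ 2)%:C.
Proof.
move=> W0; rewrite -subr_ge0 => d0.
rewrite /lambda2_of sqrtC_real_ge0 ?mulr_ge0 ?exprn_ge0 //.
rewrite sqrtrM ?exprn_ge0 // sqrtr_sqr ger0_norm //.
rewrite -rmorphD -(rmorph_nat (real_complex R)) -fmorph_div; congr _%:C.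
have := sqr_sqrtr d0; set s := Num.sqrt _ => hs.
have -> : D = (W ^+ 2 - s ^+ 2) / 4 by rewrite hs; field.
by field.
Qed.

Lemma cmod_lambda2_of_complex (D W : R) : 0 <= D -> W ^+ 2 <= 4 * D ->
  cmod (lambda2_of D W) = D.
Proof.
move=> D0 WD; have b0 : W ^+ 2 * (W ^+ 2 - 4 * D) <= 0.
  by rewrite mulr_ge0_le0 ?sqr_ge0 // subr_le0.
rewrite /lambda2_of; have [y [-> hy]] := sqrtC_real_le0 b0.
have -> : (-2 * D + W ^+ 2)%:C + 0 +i* y = (-2 * D + W ^+ 2) +i* y.
  by apply/eqP; rewrite eq_complex /= addr0 add0r !eqxx.
rewrite half_complex /cmod.
suff -> : (((-2 * D + W ^+ 2) / 2) ^+ 2 + (y / 2) ^+ 2) = D ^+ 2.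
  by rewrite sqrtr_sqr ger0_norm.
by rewrite !expr_div_n hy; field.
Qed.

Lemma Delta_le_cmod_lambda2_of (D W : R) : 0 <= D -> 0 <= W ->
  D <= cmod (lambda2_of D W).
Proof.
move=> D0 W0; have [WD | DW] := leP (W ^+ 2) (4 * D).
  by rewrite cmod_lambda2_of_complex.
rewrite (lambda2_of_real W0 (ltW DW)).
rewrite cmod_real ger0_norm ?sqr_ge0 //.
have s0 := sqrtr_ge0 (W ^+ 2 - 4 * D); nra.
Qed.

Lemma lt_larger_root (D W u : R) : u ^+ 2 - W * u + D < 0 ->
  4 * D < W ^+ 2 /\ u < (W + Num.sqrt (W ^+ 2 - 4 * D)) / 2.
Proof.
move=> neg; have disc : (2 * u - W) ^+ 2 < W ^+ 2 - 4 * D by nra.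
have d0 : 0 < W ^+ 2 - 4 * D by apply: le_lt_trans disc; apply: sqr_ge0.
split; first by rewrite -subr_gt0.
have := sqr_sqrtr (ltW d0); have := sqrtr_ge0 (W ^+ 2 - 4 * D).
set s := Num.sqrt _ => s0 ss; nra.
Qed.

Lemma sqrt_cmod_lambda2_of_ge (D W e : R) :
  0 <= D -> D < 1 -> 0 < e -> 1 + D - W < 2 * e * (1 - D) ->
  1 - 8 * e <= Num.sqrt (cmod (lambda2_of D W)).
Proof.
move=> D0 D1 e0 We; have [r0 | r0] := leP (1 - 8 * e) 0.
  exact: le_trans r0 (sqrtr_ge0 _).
have W0 : 0 <= W by nra.
have [rD | Dr] := leP (1 - 8 * e) D.
  apply: (le_trans rD); apply: le_trans _ (ler_wsqrtr (Delta_le_cmod_lambda2_of D0 W0)).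
  have := sqr_sqrtr D0; have := sqrtr_ge0 D; set t := Num.sqrt D => t0 tt; nra.
have u0 : (1 - 4 * e) ^+ 2 - W * (1 - 4 * e) + D < 0 by nra.
have [DW lt_root] := lt_larger_root u0.
rewrite (lambda2_of_real W0 (ltW DW)).
rewrite cmod_real ger0_norm ?sqr_ge0 // sqrtr_sqr.
apply: le_trans (ler_norm _); lra.
Qed.

End HeavyBallRoot.

Local Close Scope complex_scope.

Theorem proposition6 (R : realType) :
  exists C : R, 0 < C /\
  forall (n d : nat) (A : 'M[R]_(n, d)) (sig2 : 'I_n -> R)
         (zeta gamma Delta : R),
    (0 < n)%N ->
    A != 0 ->
    is_eigvals (A *m A^T) sig2 ->
    0 < zeta -> zeta <= 1 ->
    zeta <= Num.min (1 / 2) (ICR sig2) ->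
    0 < gamma -> 0 <= Delta -> Delta < 1 ->
    gamma < (1 + Delta) / (zeta * sig2_max sig2) ->
    (1 - zeta) * gamma / (1 - Delta) * ((n%:R)^-1 * \tr (A *m A^T)) < 1 ->
    Num.sqrt (lambda2_max sig2 gamma zeta Delta)
      >= 1 - C * zeta / kappa_bar sig2.
Proof.
exists 8; split; first lra.
move=> n d A s z g D n_gt0 _ eigs z_gt0 _ z_min g_gt0 D_ge0 D_lt1 _ trace_cond.
have /andP[z_half z_ICR] : (z <= 1 / 2) && (z <= ICR s) by rewrite -le_min.
have [min_gt0 mean_gt0] := sig2_min_mean_gt0 (lt_le_trans z_gt0 z_ICR).
have [j sj_gt0 sjE] := sig2_min_attained min_gt0.
rewrite (is_eigvals_trace n_gt0 eigs) -/(sig2_mean s) in trace_cond.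
set e := z * sig2_min s / sig2_mean s.
have e_gt0 : 0 < e := divr_gt0 (mulr_gt0 z_gt0 min_gt0) mean_gt0.
have -> : 8 * z / kappa_bar s = 8 * e.
  by rewrite kappa_barE /e; field; rewrite !gt_eqF.
have g_mean : g * sig2_mean s < 2 * (1 - D).
  move: trace_cond; rewrite mulrAC ltr_pdivrMr ?subr_gt0 // mul1r => trace_lt.
  have : 0 < g * sig2_mean s by rewrite mulr_gt0.
  nra.
have gap : 1 + D - Omega s g z D j < 2 * e * (1 - D).
  have -> : 1 + D - Omega s g z D j = g * sig2_mean s * e.
    by rewrite /Omega sjE /e; field; rewrite gt_eqF.
  nra.
apply: le_trans (sqrt_cmod_lambda2_of_ge D_ge0 D_lt1 e_gt0 gap) _.
by apply: ler_wsqrtr; rewrite -lambda2E; apply: le_bigmax_cond.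
Qed.
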